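(* Let $(\Gamma,\lambda)$ be a tree plan. The complete $\mathcal{L}_\Gamma$-theory $\mathrm{Th}(\Gamma(\omega))$ is $\aleph_0$-categorical and has quantifier elimination.
   Context: Tree plans: a tree plan is a pair $(\Gamma,\lambda)$ where $\Gamma\subseteq\omega^{<\omega}$ is a finite set of finite sequences containing the empty sequence $\langle\rangle$ and closed under initial segments, and $\lambda:\Gamma\to\{1,\infty\}$ with $\lambda(\langle\rangle)=1$. $\Gamma(\omega)$ is the set of finite sequences $\langle(i_0,t_0),\dots,(i_n,t_n)\rangle$ (including the empty one) such that $\langle i_0,\dots,i_n\rangle\in\Gamma$ and for each $k\le n$: $t_k=\star$ (a fixed symbol not in $\omega$) if $\lambda(\langle i_0,\dots,i_k\rangle)=1$, and $t_k\in\omega$ if $\lambda(\langle i_0,\dots,i_k\rangle)=\infty$. It is a tree under the initial-segment order, viewed as a structure in the language $\mathcal{L}_t$ with $\le$, root constant $\varepsilon$ (the empty sequence), meet $\sqcap$ (longest common initial segment) and $\mathtt{pred}$ (delete the last entry; $\mathtt{pred}(\varepsilon)=\varepsilon$). The map $\pi:\Gamma(\omega)\to\Gamma$ sends $\langle(i_0,t_0),\dots,(i_n,t_n)\rangle$ to $\langle i_0,\dots,i_n\rangle$. The language $\mathcal{L}_\Gamma$ is $\mathcal{L}_t$ together with unary predicates $P_\sigma$ ($\sigma\in\Gamma$), interpreted by $P_\sigma=\pi^{-1}(\sigma)$. *)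

From mathcomp Require Import all_boot zify.
Set Implicit Arguments. Unset Strict Implicit. Unset Printing Implicit Defensive.

Inductive lab := One | Inf.

(* A tree plan: Gamma is a finite set (given as a list) of finite sequences
   of naturals, containing the empty sequence, closed under initial
   segments; lam : Gamma -> {1,oo} (extended arbitrarily outside Gamma,
   values there are irrelevant), with lam <> = 1. *)
Definition tree_plan (G : seq (seq nat)) (lam : seq nat -> lab) : Prop :=
  [/\ [::] \in G, (forall (s : seq nat) (n : nat), s \in G -> take n s \in G)
    & lam [::] = One].

(* Elements of Gamma(omega): sequences of pairs (i_k, t_k), with t_k = None
   playing the role of the symbol star and t_k = Some m, m in omega. *)
Definition okpair (lam : seq nat -> lab) (x : seq (nat * option nat)) (k : nat)
  : bool :=
  match (nth (0, None) x k).2 with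
  | None => if lam (take k.+1 (map fst x)) is One then true else false
  | Some _ => if lam (take k.+1 (map fst x)) is Inf then true else false
  end.

Definition valid (G : seq (seq nat)) (lam : seq nat -> lab)
  (x : seq (nat * option nat)) : bool :=
  (map fst x \in G) && all (okpair lam x) (iota 0 (size x)).

Fixpoint lcp (T : eqType) (x y : seq T) : seq T :=
  match x, y with
  | a :: x', b :: y' => if a == b then a :: lcp x' y' else [::]
  | _, _ => [::]
  end.

Lemma lcp_take (T : eqType) (x y : seq T) : lcp x y = take (size (lcp x y)) x.
Proof.
elim: x y => [|a x IH] [|b y] //=.
case: eqP => // _ /=; by rewrite -IH.
Qed.

Lemma valid_take G lam x n :
  tree_plan G lam -> valid G lam x -> valid G lam (take n x).
Proof.
case=> _ Hpre _ /andP[Hx Hall]; apply/andP; split.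
  by rewrite map_take; apply: Hpre.
apply/allP=> k; rewrite mem_iota add0n size_take => /andP[_ hk].
have [hkn hks] : k < n /\ k < size x.
  by move: hk; case: (ltnP n (size x)) => H1 H2; split; lia.
rewrite /okpair nth_take // -map_take take_takel //.
have := allP Hall k; rewrite mem_iota add0n hks /okpair map_take; exact.
Qed.

Section Gomega.
Variables (G : seq (seq nat)) (lam : seq nat -> lab) (HG : tree_plan G lam).

Definition gcar := {x : seq (nat * option nat) | valid G lam x}.

Lemma valid_nil : valid G lam [::].
Proof. by case: HG => H _ _; rewrite /valid /= H. Qed.

Lemma valid_lcp (x y : gcar) : valid G lam (lcp (sval x) (sval y)).
Proof. rewrite lcp_take; exact: (valid_take _ HG (svalP x)). Qed.

Lemma valid_pred (x : gcar) : valid G lam (take (size (sval x)).-1 (sval x)).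
Proof. exact: (valid_take _ HG (svalP x)). Qed.

Definition g_eps : gcar := exist _ [::] valid_nil.
Definition g_meet (x y : gcar) : gcar := exist _ (lcp (sval x) (sval y)) (valid_lcp x y).
Definition g_pred (x : gcar) : gcar := exist _ (take (size (sval x)).-1 (sval x)) (valid_pred x).
Definition g_le (x y : gcar) : Prop := prefix (sval x) (sval y).
Definition g_P (s : {s : seq nat | s \in G}) (x : gcar) : Prop :=
  map fst (sval x) = sval s.
End Gomega.

(* L_Gamma-structures: <=, constant eps, meet, pred, unary P_sigma
   (sigma in Gamma).  Equality is the equality of the carrier. *)
Record Lstr (G : seq (seq nat)) := {
  car :> Type;
  s_eps : car;
  s_meet : car -> car -> car;
  s_pred : car -> car;
  s_le : car -> car -> Prop;
  s_P : {s : seq nat | s \in G} -> car -> Prop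
}.

Definition Gomega (G : seq (seq nat)) (lam : seq nat -> lab)
  (HG : tree_plan G lam) : Lstr G :=
  {| car := gcar G lam;
     s_eps := g_eps HG;
     s_meet := @g_meet G lam HG;
     s_pred := @g_pred G lam HG;
     s_le := @g_le G lam;
     s_P := @g_P G lam |}.

Inductive term :=
| TVar of nat
| TEps
| TMeet of term & term
| TPred of term.

Inductive formula (G : seq (seq nat)) :=
| FFalse
| FEq of term & term
| FLe of term & term
| FP of {s : seq nat | s \in G} & term
| FNot of formula G
| FAnd of formula G & formula G
| FOr of formula G & formula G
| FImp of formula G & formula G
| FAll of nat & formula G
| FEx of nat & formula G.
Arguments FFalse {G}.

Fixpoint eval G (M : Lstr G) (v : nat -> M) (t : term) : M :=
  match t with
  | TVar n => v n
  | TEps => s_eps M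
  | TMeet t1 t2 => s_meet (eval v t1) (eval v t2)
  | TPred t1 => s_pred (eval v t1)
  end.

Definition upd (T : Type) (v : nat -> T) (n : nat) (a : T) : nat -> T :=
  fun k => if k == n then a else v k.

Fixpoint sat G (M : Lstr G) (v : nat -> M) (f : formula G) : Prop :=
  match f with
  | FFalse => False
  | FEq t1 t2 => eval v t1 = eval v t2
  | FLe t1 t2 => s_le (eval v t1) (eval v t2)
  | FP s t => s_P s (eval v t)
  | FNot f1 => ~ sat v f1
  | FAnd f1 f2 => sat v f1 /\ sat v f2
  | FOr f1 f2 => sat v f1 \/ sat v f2
  | FImp f1 f2 => sat v f1 -> sat v f2
  | FAll n f1 => forall a : M, sat (upd v n a) f1
  | FEx n f1 => exists a : M, sat (upd v n a) f1
  end.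

Fixpoint fvt (t : term) : seq nat :=
  match t with
  | TVar n => [:: n]
  | TEps => [::]
  | TMeet t1 t2 => fvt t1 ++ fvt t2
  | TPred t1 => fvt t1
  end.

Fixpoint fv G (f : formula G) : seq nat :=
  match f with
  | FFalse => [::]
  | FEq t1 t2 | FLe t1 t2 => fvt t1 ++ fvt t2
  | FP _ t => fvt t
  | FNot f1 => fv f1
  | FAnd f1 f2 | FOr f1 f2 | FImp f1 f2 => fv f1 ++ fv f2
  | FAll n f1 | FEx n f1 => [seq k <- fv f1 | k != n]
  end.

Fixpoint qfree G (f : formula G) : bool :=
  match f with
  | FFalse | FEq _ _ | FLe _ _ | FP _ _ => true
  | FNot f1 => qfree f1
  | FAnd f1 f2 | FOr f1 f2 | FImp f1 f2 => qfree f1 && qfree f2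
  | FAll _ _ | FEx _ _ => false
  end.

Definition sentence G (f : formula G) : bool := fv f == [::].

Definition theory G := formula G -> Prop.

Definition Th G (M : Lstr G) : theory G :=
  fun f => sentence f /\ forall v : nat -> M, sat v f.

Definition models G (M : Lstr G) (T : theory G) : Prop :=
  forall f, T f -> forall v : nat -> M, sat v f.

Definition Liso G (M N : Lstr G) : Prop :=
  exists h : M -> N,
    bijective h /\
    h (s_eps M) = s_eps N /\
    (forall x y, h (s_meet x y) = s_meet (h x) (h y)) /\
    (forall x, h (s_pred x) = s_pred (h x)) /\
    (forall x y, s_le x y <-> s_le (h x) (h y)) /\
    (forall s x, s_P s x <-> s_P s (h x)).

Definition countably_infinite (T : Type) : Prop :=
  exists f : nat -> T, bijective f.

Definition aleph0_categorical G (T : theory G) : Prop :=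
  forall M N : Lstr G, models M T -> models N T ->
    countably_infinite M -> countably_infinite N -> Liso M N.

Definition has_QE G (T : theory G) : Prop :=
  forall f : formula G, exists g : formula G,
    qfree g /\ {subset fv g <= fv f} /\
    forall M : Lstr G, models M T -> forall v : nat -> M, sat v f <-> sat v g.

From mathcomp Require Import all_boot zify.
From Stdlib Require Import Classical ClassicalEpsilon.
Set Implicit Arguments. Unset Strict Implicit. Unset Printing Implicit Defensive.

(* The key fact is that Gamma(omega) is homogeneous in a strong, finitary sense:
   two tuples with the same pi-labels and the same "meet pattern" (which prefix
   lengths of pairs of elements coincide) are conjugate under an automorphism.
   Automorphisms are built by relabelling: at every node, the omega-labels of
   the children are permuted by a permutation that may depend on the node, and
   a finite partial injection of labels extends to such a permutation.  Since
   elements have depth bounded by the height of Gamma, the pi-labels and the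
   meet pattern of a tuple indexed by X are expressed by finitely many atomic
   formulas (P_sigma x and pred^a x = pred^b y); a complete conjunction of these
   literals (a "diagram") therefore decides every formula with free variables in
   X in Gamma(omega), and by completeness of Th every model of Th agrees.
   Quantifier elimination follows by taking the disjunction of the diagrams
   implying a given formula.  For categoricity, diagrams isolate complete types,
   which gives the forth step of a back-and-forth between two countable models;
   interleaving two enumerations yields an elementary correspondence, hence an
   isomorphism. *)

Lemma eqfun_in_cat (T : Type) (s1 s2 : seq nat) (v w : nat -> T) :
  {in s1 ++ s2, v =1 w} -> {in s1, v =1 w} /\ {in s2, v =1 w}.
Proof. by move=> H; split=> x hx; apply: H; rewrite mem_cat hx ?orbT. Qed.

Lemma eqfun_in_upd (T : Type) (s : seq nat) (v w : nat -> T) n a :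
  {in [seq k <- s | k != n], v =1 w} -> {in s, upd v n a =1 upd w n a}.
Proof.
by move=> H x hx; rewrite /upd; case: eqP => // /eqP xn; apply: H; rewrite mem_filter xn.
Qed.

Lemma eval_ext G (M : Lstr G) (v w : nat -> M) t :
  {in fvt t, v =1 w} -> eval v t = eval w t.
Proof.
elim: t => [n | | t1 IH1 t2 IH2 | t IH] //= H; first by apply: H; rewrite inE.
  by case: (eqfun_in_cat H) => /IH1-> /IH2->.
by rewrite IH.
Qed.

Lemma sat_coinc G (M : Lstr G) (f : formula G) (v w : nat -> M) :
  {in fv f, v =1 w} -> (sat v f <-> sat w f).
Proof.
elim: f v w => [|t1 t2|t1 t2|s t|f IH|f1 IH1 f2 IH2|f1 IH1 f2 IH2|f1 IH1 f2 IH2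
  |n f IH|n f IH] v w /= H //.
- by case: (eqfun_in_cat H) => /eval_ext-> /eval_ext->.
- by case: (eqfun_in_cat H) => /eval_ext-> /eval_ext->.
- by rewrite (eval_ext H).
- by rewrite (IH v w H).
- by case: (eqfun_in_cat H) => /IH1-> /IH2->.
- by case: (eqfun_in_cat H) => /IH1-> /IH2->.
- by case: (eqfun_in_cat H) => /IH1-> /IH2->.
- by split=> h a; apply/(IH _ _ (eqfun_in_upd a H)).
- by split=> -[a h]; exists a; apply/(IH _ _ (eqfun_in_upd a H)).
Qed.

Lemma sat_ext G (M : Lstr G) (f : formula G) (v w : nat -> M) :
  v =1 w -> (sat v f <-> sat w f).
Proof. by move=> H; apply: sat_coinc => x _; apply: H. Qed.

Fixpoint closeAll G (X : seq nat) (f : formula G) : formula G :=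
  if X is n :: X' then FAll n (closeAll X' f) else f.

Lemma fv_closeAll G X (f : formula G) k :
  (k \in fv (closeAll X f)) = (k \in fv f) && (k \notin X).
Proof.
elim: X => [|n X IH] /=; first by rewrite andbT.
by rewrite mem_filter IH inE negb_or; case: (k \in fv f); case: (k == n).
Qed.

Lemma closeAll_sentence G (f : formula G) : sentence (closeAll (fv f) f).
Proof.
apply/eqP; case E: (fv (closeAll (fv f) f)) => [|k s] //.
have : k \in fv (closeAll (fv f) f) by rewrite E inE eqxx.
by rewrite fv_closeAll; case: (k \in fv f).
Qed.

Lemma sat_closeAll G (M : Lstr G) X (f : formula G) :
  (forall v : nat -> M, sat v (closeAll X f)) <-> (forall v : nat -> M, sat v f).
Proof.
elim: X => [|n X IH] //=; split=> [h|h v a]; last exact: (proj2 IH h).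
apply: (proj1 IH) => v; apply: (proj1 (sat_ext _ _)) (h v (v n)).
by move=> x; rewrite /upd; case: eqP => [->|].
Qed.

Lemma Th_transfer G (M : Lstr G) lam (HG : tree_plan G lam) (f : formula G) :
  models M (Th (Gomega HG)) ->
  (forall v, sat (M := Gomega HG) v f) -> forall v : nat -> M, sat v f.
Proof.
move=> hM h; apply/(sat_closeAll M (fv f)); apply: hM.
by split; [exact: closeAll_sentence | apply/sat_closeAll].
Qed.

Section IsoInvariance.
Variables (G : seq (seq nat)) (M N : Lstr G) (h : M -> N).
Hypotheses (h_bij : bijective h) (h_eps : h (s_eps M) = s_eps N)
  (h_meet : forall x y, h (s_meet x y) = s_meet (h x) (h y))
  (h_pred : forall x, h (s_pred x) = s_pred (h x))
  (h_le : forall x y, s_le x y <-> s_le (h x) (h y))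
  (h_P : forall s x, s_P s x <-> s_P s (h x)).

Lemma eval_iso (v : nat -> M) t : h (eval v t) = eval (fun n => h (v n)) t.
Proof. by elim: t => [n | | t1 IH1 t2 IH2 | t IH] //=; rewrite ?h_meet ?h_pred ?IH1 ?IH2 ?IH. Qed.

Lemma sat_iso (f : formula G) (v : nat -> M) : sat v f <-> sat (fun n => h (v n)) f.
Proof.
have [g hK gK] := h_bij.
have h_upd w n a : (fun k => h (upd w n a k)) =1 upd (fun k => h (w k)) n (h a).
  by move=> k; rewrite /upd; case: eqP.
elim: f v => [|t1 t2|t1 t2|s t|f IH|f1 IH1 f2 IH2|f1 IH1 f2 IH2|f1 IH1 f2 IH2
  |n f IH|n f IH] v /=; rewrite -?eval_iso ?IH ?IH1 ?IH2 //.
- by split=> [->//|]; apply: bij_inj.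
- split=> H b; last by apply/IH/(sat_ext _ (h_upd v n b)).
  by rewrite -[b]gK; apply/(sat_ext _ (h_upd v n (g b)))/IH.
- split=> -[a H]; first by exists (h a); apply/(sat_ext _ (h_upd v n a))/IH.
  by exists (g a); apply/IH/(sat_ext _ (h_upd v n (g a))); rewrite gK.
Qed.

End IsoInvariance.

Definition entry := (nat * option nat)%type.
Definition entry0 : entry := (0, None).

(* relabel r c y replaces every omega-label m at position k of y by r c' i m,
   where c' = c ++ take k y is the (original) prefix and i the Gamma-index;
   unrelabel is its inverse when every r c' i is a permutation. *)
Fixpoint relabel (r : seq entry -> nat -> nat -> nat) (c : seq entry) (y : seq entry)
  : seq entry :=
  if y is a :: y' then (a.1, omap (r c a.1) a.2) :: relabel r (rcons c a) y'
  else [::].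

Fixpoint unrelabel (ri : seq entry -> nat -> nat -> nat) (c : seq entry) (z : seq entry)
  : seq entry :=
  if z is b :: z' then
    let a := (b.1, omap (ri c b.1) b.2) in a :: unrelabel ri (rcons c a) z'
  else [::].

Section Relabel.
Variables (r ri : seq entry -> nat -> nat -> nat).
Hypotheses (rK : forall c i, cancel (r c i) (ri c i))
           (riK : forall c i, cancel (ri c i) (r c i)).

Let r_inj c i : injective (r c i). Proof. exact: can_inj (rK c i). Qed.

Lemma relabelK c : cancel (relabel r c) (unrelabel ri c).
Proof.
move=> y; elim: y c => [|[i t] y IH] c //=.
have -> : omap (ri c i) (omap (r c i) t) = t by case: t => //= m; rewrite rK.
by rewrite IH.
Qed.

Lemma unrelabelK c : cancel (unrelabel ri c) (relabel r c).
Proof.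
move=> z; elim: z c => [|[i t] z IH] c //=.
have -> : omap (r c i) (omap (ri c i) t) = t by case: t => //= m; rewrite riK.
by rewrite IH.
Qed.

Lemma relabel_entry_eq c (a b : entry) :
  ((a.1, omap (r c a.1) a.2) == (b.1, omap (r c b.1) b.2)) = (a == b).
Proof.
case: a b => [i t] [j s] /=; case: (eqVneq i j) => [<-|ne]; last first.
  by apply/idP/idP => /eqP [] e; rewrite e eqxx in ne.
case: t s => [m|] [n|] //=; apply/idP/idP => /eqP [] // e.
- by move/r_inj: e => ->.
- by rewrite e.
Qed.

Lemma lcp_relabel c x y : lcp (relabel r c x) (relabel r c y) = relabel r c (lcp x y).
Proof.
elim: x c y => [|a x IH] c [|b y] //=.
by rewrite relabel_entry_eq; case: eqP => [->|] //=; rewrite IH.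
Qed.

Lemma prefix_relabel c x y : prefix (relabel r c x) (relabel r c y) = prefix x y.
Proof.
elim: x c y => [|a x IH] c [|b y] //=.
by rewrite relabel_entry_eq; case: eqP => [->|] //=; rewrite IH.
Qed.

End Relabel.

Lemma size_relabel r c y : size (relabel r c y) = size y.
Proof. by elim: y c => [|a y IH] c //=; rewrite IH. Qed.

Lemma fst_relabel r c y : map fst (relabel r c y) = map fst y.
Proof. by elim: y c => [|a y IH] c //=; rewrite IH. Qed.

Lemma take_relabel r c y n : take n (relabel r c y) = relabel r c (take n y).
Proof. by elim: y c n => [|a y IH] c [|n] //=; rewrite IH. Qed.

Lemma relabel_rcons r c y a :
  relabel r c (rcons y a) = rcons (relabel r c y) (a.1, omap (r (c ++ y) a.1) a.2).
Proof. by elim: y c => [|b y IH] c /=; rewrite ?cats0 // IH cat_rcons. Qed.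

Lemma isSome_relabel r c y k :
  isSome (nth entry0 (relabel r c y) k).2 = isSome (nth entry0 y k).2.
Proof. by elim: y c k => [|[i [m|]] y IH] c [|k] //=. Qed.

Lemma okpair_relabel lam r c y k : okpair lam (relabel r c y) k = okpair lam y k.
Proof.
have := isSome_relabel r c y k; rewrite /okpair /entry0 fst_relabel.
by case: (nth _ (relabel r c y) k).2; case: (nth _ y k).2.
Qed.

Lemma valid_relabel G lam r c y : valid G lam (relabel r c y) = valid G lam y.
Proof.
rewrite /valid fst_relabel size_relabel; congr andb.
by apply: eq_all => k; apply: okpair_relabel.
Qed.

Lemma relabel_automorphism G lam (HG : tree_plan G lam) (r ri : seq entry -> nat -> nat -> nat)
  (rK : forall c i, cancel (r c i) (ri c i)) (riK : forall c i, cancel (ri c i) (r c i)) :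
  exists h : gcar G lam -> gcar G lam,
    (forall x, sval (h x) = relabel r [::] (sval x)) /\
    forall (f : formula G) (v : nat -> Gomega HG),
      sat v f <-> sat (M := Gomega HG) (fun n => h (v n)) f.
Proof.
have vh (x : gcar G lam) : valid G lam (relabel r [::] (sval x)).
  by rewrite valid_relabel; exact: (svalP x).
have vg (x : gcar G lam) : valid G lam (unrelabel ri [::] (sval x)).
  by rewrite -(valid_relabel _ _ r [::]) (unrelabelK riK); exact: (svalP x).
pose h x : gcar G lam := exist (fun y => valid G lam y) _ (vh x).
pose g x : gcar G lam := exist (fun y => valid G lam y) _ (vg x).
exists h; split=> // f v; apply: (@sat_iso G (Gomega HG) (Gomega HG) h) => /=.
- by exists g => x; apply: val_inj; rewrite /= ?(relabelK rK) ?(unrelabelK riK).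
- exact: val_inj.
- by move=> x y; apply: val_inj; rewrite /= (lcp_relabel rK).
- by move=> x; apply: val_inj; rewrite /= size_relabel take_relabel.
- by move=> x y; rewrite /g_le /= (prefix_relabel rK).
- by move=> s x; rewrite /g_P /= fst_relabel.
Qed.

(* A finite partial injection on nat extends to a permutation perm_of L,
   obtained by composing transpositions. *)
Definition swapn (a b x : nat) : nat := if x == a then b else if x == b then a else x.

Lemma swapnK a b : involutive (swapn a b).
Proof.
move=> x; rewrite /swapn.
case: (eqVneq x a) => [->|xa]; first by rewrite eqxx; case: eqP.
case: (eqVneq x b) => [->|xb]; first by rewrite eqxx.
by rewrite (negPf xa) (negPf xb).
Qed.

Fixpoint perm_of (L : seq (nat * nat)) : nat -> nat :=
  if L is p :: L' then fun x => swapn (perm_of L' p.1) p.2 (perm_of L' x) else id.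

Fixpoint perm_of_inv (L : seq (nat * nat)) : nat -> nat :=
  if L is p :: L' then fun x => perm_of_inv L' (swapn (perm_of L' p.1) p.2 x) else id.

Lemma perm_ofK L : cancel (perm_of L) (perm_of_inv L).
Proof. by elim: L => [|p L IH] x //=; rewrite swapnK IH. Qed.

Lemma perm_of_invK L : cancel (perm_of_inv L) (perm_of L).
Proof. by elim: L => [|p L IH] x //=; rewrite IH swapnK. Qed.

Definition partial_injection (L : seq (nat * nat)) : Prop :=
  forall p q, p \in L -> q \in L -> (p.1 == q.1) = (p.2 == q.2).

Lemma perm_of_graph L : partial_injection L -> forall p, p \in L -> perm_of L p.1 = p.2.
Proof.
elim: L => [|q L IH] inj_qL p //=.
have inj_L : partial_injection L by move=> p1 p2 h1 h2; apply: inj_qL; rewrite inE ?h1 ?h2 orbT.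
rewrite inE => /orP[/eqP ->|pL]; first by rewrite /swapn eqxx.
have Lp := IH inj_L p pL; rewrite Lp.
have pq : (p.1 == q.1) = (p.2 == q.2) by apply: inj_qL; rewrite inE ?pL ?eqxx ?orbT.
case: (eqVneq p.1 q.1) => [e1|ne1].
  by move: pq; rewrite -e1 Lp eqxx /swapn => /esym/eqP <-; rewrite eqxx.
have ne2 : p.2 != q.2 by rewrite -pq.
have ne3 : p.2 != perm_of L q.1 by rewrite -Lp (inj_eq (can_inj (perm_ofK L))).
by rewrite /swapn (negPf ne3) (negPf ne2).
Qed.

Lemma take_succ_eq (s t : seq entry) k : k < size s -> k < size t ->
  (take k.+1 s == take k.+1 t) = (take k s == take k t) && (nth entry0 s k == nth entry0 t k).
Proof. by move=> hs ht; rewrite !(take_nth entry0) // eqseq_rcons. Qed.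

Lemma valid_isSome G lam (y z : seq entry) k :
  valid G lam y -> valid G lam z -> k < size y -> k < size z -> map fst y = map fst z ->
  isSome (nth entry0 y k).2 = isSome (nth entry0 z k).2.
Proof.
move=> /andP[_ /allP oky] /andP[_ /allP okz] hy hz e.
move: (oky k) (okz k); rewrite !mem_iota /= hy hz /okpair /entry0 e => /(_ isT) + /(_ isT).
by case: (nth _ y k).2; case: (nth _ z k).2; case: (lam _).
Qed.

Section Homogeneity.
Variables (G : seq (seq nat)) (lam : seq nat -> lab) (HG : tree_plan G lam).
Variables (u v : nat -> gcar G lam) (X : seq nat).
Hypothesis same_shape : forall x, x \in X -> map fst (sval (u x)) = map fst (sval (v x)).
Hypothesis same_meets : forall x y k, x \in X -> y \in X ->
  (take k (sval (u x)) == take k (sval (u y))) = (take k (sval (v x)) == take k (sval (v y))).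

Let ux x := sval (u x).
Let vx x := sval (v x).

Lemma size_uv x : x \in X -> size (ux x) = size (vx x).
Proof. by move=> hx; rewrite -(size_map fst) same_shape // size_map. Qed.

Lemma nth_v x k : x \in X -> k < size (ux x) ->
  nth entry0 (vx x) k = ((nth entry0 (ux x) k).1, (nth entry0 (vx x) k).2).
Proof.
move=> hx hk; rewrite -[(nth _ (ux x) k).1](nth_map entry0 0) // same_shape //.
by rewrite (nth_map entry0) -?size_uv //; case: (nth _ _ k).
Qed.

(* The label pairs (m, m') seen at node c and Gamma-index i: u x has entry
   (i, Some m) right after the prefix c, and v x has label m' there. *)
Definition label_pair (c : seq entry) (i x k : nat) : option (nat * nat) :=
  match (nth entry0 (ux x) k).2, (nth entry0 (vx x) k).2 with
  | Some m, Some m' =>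
      if (take k (ux x) == c) && ((nth entry0 (ux x) k).1 == i) then Some (m, m') else None
  | _, _ => None
  end.

Definition label_pairs (c : seq entry) (i : nat) : seq (nat * nat) :=
  flatten [seq pmap (label_pair c i x) (iota 0 (size (ux x))) | x <- X].

Lemma label_pairsP c i m m' : reflect
  (exists x k, [/\ x \in X, k < size (ux x), take k (ux x) = c,
     nth entry0 (ux x) k = (i, Some m) & (nth entry0 (vx x) k).2 = Some m'])
  ((m, m') \in label_pairs c i).
Proof.
apply: (iffP flatten_mapP) => [[x hx]|[x [k [hx hk ec eu ev]]]]; last first.
  exists x => //; rewrite mem_pmap; apply/mapP; exists k; first by rewrite mem_iota.
  by rewrite /label_pair eu ev /= ec !eqxx.
rewrite mem_pmap => /mapP [k]; rewrite mem_iota /= /label_pair => hk.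
case eu: (nth entry0 (ux x) k) => [i0 [m0|]] //=.
case ev: (nth entry0 (vx x) k).2 => [m0'|] //.
case: eqP => //= ec; case: eqP => //= ei [em em']; subst.
by exists x, k; split; rewrite ?eu ?ei.
Qed.

(* The label pairs at each node form a partial injection: this is where the
   agreement of the meet patterns is used. *)
Lemma label_pairs_inj c i : partial_injection (label_pairs c i).
Proof.
move=> [m1 m1'] [m2 m2'] /label_pairsP [x [k [hx hk ec eu ev]]].
move=> /label_pairsP [y [j [hy hj ec' eu' ev']]] /=.
have kj : k = j by rewrite -(size_takel (ltnW hk)) -(size_takel (ltnW hj)) ec ec'.
subst j.
have tu : take k (ux x) == take k (ux y) by rewrite ec ec'.
have tv := tu; rewrite same_meets // in tv.
have hkv : k < size (vx x) by rewrite -size_uv.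
have hjv : k < size (vx y) by rewrite -size_uv.
have -> : (m1 == m2) = (nth entry0 (ux x) k == nth entry0 (ux y) k).
  by rewrite eu eu'; apply/eqP/eqP => [->|[]].
have -> : (m1' == m2') = (nth entry0 (vx x) k == nth entry0 (vx y) k).
  by rewrite (nth_v hx hk) (nth_v hy hj) eu eu' ev ev'; apply/eqP/eqP => [->|[]].
by rewrite -(andTb (_ == _)) -tu -take_succ_eq // same_meets // take_succ_eq // tv.
Qed.

Let r c i := perm_of (label_pairs c i).

Lemma relabel_take x k : x \in X -> k <= size (ux x) ->
  relabel r [::] (take k (ux x)) = take k (vx x).
Proof.
move=> hx; elim: k => [|k IH] hk; first by rewrite !take0.
have hkv : k < size (vx x) by rewrite -size_uv.
rewrite (take_nth entry0) // relabel_rcons IH ?(ltnW hk) // (take_nth entry0) //.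
congr rcons; rewrite nth_v //=.
have := valid_isSome (svalP (u x)) (svalP (v x)) hk hkv (same_shape hx).
case eu: (nth entry0 (ux x) k) => [i [m|]] /=;
  case ev: (nth entry0 (vx x) k).2 => [m'|] //= _.
suff -> : r (take k (ux x)) i m = m' by [].
apply: (perm_of_graph (@label_pairs_inj (take k (ux x)) i) (p := (m, m'))).
by apply/label_pairsP; exists x, k.
Qed.

Lemma homog_core : exists h : gcar G lam -> gcar G lam,
    (forall (f : formula G) (w : nat -> Gomega HG),
        sat w f <-> sat (M := Gomega HG) (fun n => h (w n)) f) /\
    forall x, x \in X -> h (u x) = v x.
Proof.
have [h [hv hs]] := relabel_automorphism HG (fun c i => perm_ofK (label_pairs c i))
                                             (fun c i => perm_of_invK (label_pairs c i)).
exists h; split=> // x hx; apply: val_inj; rewrite /= hv.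
by rewrite -[sval (u x)]take_size relabel_take // take_oversize // size_uv.
Qed.

End Homogeneity.

Definition depth_bound (G : seq (seq nat)) : nat := (\max_(s <- G) size s).+1.

Lemma size_gcar G lam (x : gcar G lam) : size (sval x) < depth_bound G.
Proof.
case: x => y /= /andP[hy _]; rewrite -(size_map fst) ltnS.
by apply: leq_bigmax_seq.
Qed.

Definition predn (k : nat) (t : term) : term := iter k TPred t.

Lemma fvt_predn k x : fvt (predn k (TVar x)) = [:: x].
Proof. by elim: k. Qed.

Lemma eval_predn G lam (HG : tree_plan G lam) (w : nat -> Gomega HG) k t :
  sval (eval w (predn k t)) = take (size (sval (eval w t)) - k) (sval (eval w t)).
Proof.
elim: k => [|k IH] /=; first by rewrite subn0 take_size.
rewrite -/(predn k t) IH size_takel ?leq_subr // take_takel ?leq_pred //.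
by rewrite subnS.
Qed.

Lemma take_size_sub (T : Type) (s : seq T) k : take (size s - (size s - k)) s = take k s.
Proof.
case: (leqP k (size s)) => h; first by rewrite subKn.
have -> : size s - k = 0 by apply/eqP; rewrite subn_eq0 ltnW.
by rewrite subn0 take_size take_oversize // ltnW.
Qed.

Fixpoint agree_on G (M : Lstr G) (u v : nat -> M) (l : seq (formula G)) : Prop :=
  if l is a :: l' then (sat u a <-> sat v a) /\ agree_on u v l' else True.

Lemma agree_on_cat G (M : Lstr G) (u v : nat -> M) l1 l2 :
  agree_on u v (l1 ++ l2) -> agree_on u v l1 /\ agree_on u v l2.
Proof. by elim: l1 => [|a l1 IH] //= [h1 /IH [h2 h3]]. Qed.

Lemma agree_on_flatten G (M : Lstr G) (u v : nat -> M) (T : eqType)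
    (F : T -> seq (formula G)) s :
  agree_on u v (flatten (map F s)) -> forall x, x \in s -> agree_on u v (F x).
Proof.
elim: s => [|y s IH] //= /agree_on_cat [h1 h2] x.
by rewrite inE => /orP[/eqP->//|]; exact: IH.
Qed.

Lemma agree_on_map G (M : Lstr G) (u v : nat -> M) (T : eqType) (F : T -> formula G) s :
  agree_on u v (map F s) -> forall x, x \in s -> (sat u (F x) <-> sat v (F x)).
Proof.
elim: s => [|y s IH] //= [h1 h2] x.
by rewrite inE => /orP[/eqP->//|]; exact: IH.
Qed.

Definition sigG G : seq {s : seq nat | s \in G} := pmap insub G.

Definition atoms G (X : seq nat) : seq (formula G) :=
  flatten [seq [seq FP s (TVar x) | s <- sigG G] | x <- X] ++
  flatten [seq flatten [seq flatten [seq
    [seq FEq G (predn a (TVar x)) (predn b (TVar y)) | b <- iota 0 (depth_bound G)]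
    | a <- iota 0 (depth_bound G)] | y <- X] | x <- X].

Lemma agree_shape G lam (HG : tree_plan G lam) (u v : nat -> Gomega HG) X x :
  agree_on u v (atoms G X) -> x \in X -> map fst (sval (u x)) = map fst (sval (v x)).
Proof.
case/agree_on_cat => /agree_on_flatten agreeP _ hx.
have hG : map fst (sval (u x)) \in G by case/andP: (svalP (u x)).
pose s0 : {s : seq nat | s \in G} := exist (fun s => s \in G) _ hG.
have hs0 : s0 \in sigG G by rewrite /sigG mem_pmap_sub.
by have [+ _] := agree_on_map (agreeP x hx) hs0; rewrite /= /g_P /= => ->.
Qed.

Lemma agree_meets G lam (HG : tree_plan G lam) (u v : nat -> Gomega HG) X x y k :
  agree_on u v (atoms G X) -> x \in X -> y \in X ->
  (take k (sval (u x)) == take k (sval (u y))) = (take k (sval (v x)) == take k (sval (v y))).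
Proof.
move=> agreeX hx hy.
have HS z : z \in X -> size (sval (u z)) = size (sval (v z)).
  by move=> hz; rewrite -(size_map fst) (agree_shape agreeX hz) size_map.
have bound z : size (sval (u z)) - k \in iota 0 (depth_bound G).
  by rewrite mem_iota /= (leq_ltn_trans (leq_subr _ _)) // size_gcar.
case/agree_on_cat: agreeX => _ /agree_on_flatten /(_ x hx) /agree_on_flatten /(_ y hy).
move/agree_on_flatten/(_ _ (bound x))/agree_on_map/(_ _ (bound y)) => /=.
have pred_eq (w : nat -> Gomega HG) a b :
    (eval w (predn a (TVar x)) = eval w (predn b (TVar y))) <->
    (take (size (sval (w x)) - a) (sval (w x)) = take (size (sval (w y)) - b) (sval (w y))).
  rewrite -!(eval_predn w _ (TVar _)); split=> [->//|]; exact: val_inj.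
rewrite !pred_eq !take_size_sub (HS x) // (HS y) // !take_size_sub.
by case=> h1 h2; apply/eqP/eqP.
Qed.

Lemma homog G lam (HG : tree_plan G lam) (u v : nat -> Gomega HG) X :
  agree_on u v (atoms G X) ->
  exists h : gcar G lam -> gcar G lam,
    (forall (f : formula G) (w : nat -> Gomega HG),
        sat w f <-> sat (M := Gomega HG) (fun n => h (w n)) f) /\
    forall x, x \in X -> h (u x) = v x.
Proof.
move=> agreeX; apply: homog_core => x *; first exact: agree_shape agreeX _.
exact: agree_meets agreeX _ _.
Qed.

Definition FTrue G : formula G := FNot FFalse.

Fixpoint diagram G (l : seq (formula G)) (bs : seq bool) : formula G :=
  match l, bs with
  | a :: l', b :: bs' => FAnd (if b then a else FNot a) (diagram l' bs')
  | _, _ => FTrue G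
  end.

Lemma diagram_exists G (M : Lstr G) (w : nat -> M) l :
  exists2 bs, size bs = size l & sat w (diagram l bs).
Proof.
elim: l => [|a l [bs hs hb]]; first by exists [::].
by case: (classic (sat w a)) => h; [exists (true :: bs) | exists (false :: bs)];
  rewrite /= ?hs.
Qed.

Lemma diagram_agree G (M : Lstr G) (u v : nat -> M) l bs :
  size bs = size l -> sat u (diagram l bs) -> sat v (diagram l bs) -> agree_on u v l.
Proof.
elim: l bs => [|a l IH] [|b bs] //= [hs] [h1 h2] [h3 h4].
by split; [case: b h1 h3 => /=; tauto | exact: (IH bs)].
Qed.

Lemma diagram_decides G lam (HG : tree_plan G lam) (f : formula G) (X : seq nat) bs :
  {subset fv f <= X} -> size bs = size (atoms G X) ->
  (forall w : nat -> Gomega HG, sat w (FImp (diagram (atoms G X) bs) f)) \/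
  (forall w : nat -> Gomega HG, sat w (FImp (diagram (atoms G X) bs) (FNot f))).
Proof.
move=> fvX hs.
case: (classic (exists2 u : nat -> Gomega HG, sat u (diagram (atoms G X) bs) & sat u f))
  => [[u hu hf]|none]; [left=> w /= hw | right=> w /= hw hf; apply: none; by exists w].
have [h [h_sat h_uv]] := homog (diagram_agree hs hu hw).
have agree : {in fv f, (fun n => h (u n)) =1 w} by move=> x /fvX; exact: h_uv.
by apply/(sat_coinc (M := Gomega HG) agree); apply/(h_sat f u).
Qed.

Fixpoint all_bool_seqs n : seq (seq bool) :=
  if n is n'.+1 then [seq b :: s | b <- [:: true; false], s <- all_bool_seqs n']
  else [:: [::]].

Lemma mem_all_bool_seqs bs : bs \in all_bool_seqs (size bs).
Proof.
elim: bs => [|b bs IH] //=.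
by case: b; rewrite !mem_cat (map_f (cons _) IH) ?orbT.
Qed.

Fixpoint disj G (l : seq (formula G)) : formula G :=
  if l is a :: l' then FOr a (disj l') else FFalse.

Lemma sat_disj G (M : Lstr G) (w : nat -> M) (T : eqType) (F : T -> formula G) s :
  sat w (disj (map F s)) <-> exists2 x, x \in s & sat w (F x).
Proof.
elim: s => [|y s IH] /=; first by split=> // -[].
rewrite IH; split=> [[h|[x hx h]]|[x]]; first by exists y; rewrite ?inE ?eqxx.
  by exists x; rewrite // inE hx orbT.
by rewrite inE => /orP[/eqP-> h|hx h]; [left | right; exists x].
Qed.

Definition qf_over G (X : seq nat) (a : formula G) : bool :=
  qfree a && all (fun k => k \in X) (fv a).

Lemma all_flatten_map (T : eqType) (A : Type) (a : pred A) (F : T -> seq A) s :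
  (forall x, x \in s -> all a (F x)) -> all a (flatten (map F s)).
Proof.
elim: s => [|y s IH] //= H; rewrite all_cat H ?inE ?eqxx //= IH // => x hx.
by apply: H; rewrite inE hx orbT.
Qed.

Lemma atoms_qf G X : all (qf_over X) (atoms G X).
Proof.
rewrite all_cat; apply/andP; split; apply: all_flatten_map => x hx.
  by rewrite all_map; apply/allP=> s _; rewrite /qf_over /= hx.
apply: all_flatten_map => y hy; apply: all_flatten_map => a _.
by rewrite all_map; apply/allP=> b _; rewrite /qf_over /= !fvt_predn /= hx hy.
Qed.

Lemma diagram_qf G X (l : seq (formula G)) bs :
  all (qf_over X) l -> qf_over X (diagram l bs).
Proof.
elim: l bs => [|a l IH] [|b bs] //= /andP[qa /(IH bs)]; move: qa.
by rewrite /qf_over; case: b => /= /andP[-> fa] /andP[-> fl]; rewrite all_cat fa fl.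
Qed.

Lemma disj_qf G X (l : seq (formula G)) : all (qf_over X) l -> qf_over X (disj l).
Proof.
elim: l => [|a l IH] //= /andP[qa /IH]; move: qa.
by rewrite /qf_over /= => /andP[-> fa] /andP[-> fl]; rewrite all_cat fa fl.
Qed.

Definition decide (P : Prop) : bool := if excluded_middle_informative P then true else false.

Lemma decideP (P : Prop) : decide P <-> P.
Proof. by rewrite /decide; case: excluded_middle_informative. Qed.

(* Quantifier elimination: f is equivalent to the disjunction of the diagrams
   over fv f that imply f in Gamma(omega). *)
Lemma QE G lam (HG : tree_plan G lam) : has_QE (Th (Gomega HG)).
Proof.
move=> f; pose X := fv f; pose D := diagram (atoms G X).
pose S := [seq bs <- all_bool_seqs (size (atoms G X)) |
            decide (forall w : nat -> Gomega HG, sat w (FImp (D bs) f))].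
exists (disj (map D S)).
have /andP[qf fvS] : qf_over X (disj (map D S)).
  by apply: disj_qf; rewrite all_map; apply/allP=> bs _; apply/diagram_qf/atoms_qf.
split=> //; split=> [k|M hM v]; first by move/allP: fvS; apply.
split=> [hf|/sat_disj [bs]]; last first.
  by rewrite mem_filter => /andP[/decideP H _]; apply: (Th_transfer hM H v).
have [bs hs hb] := diagram_exists v (atoms G X).
apply/sat_disj; exists bs => //; rewrite mem_filter -hs mem_all_bool_seqs andbT.
have [H|H] := diagram_decides HG (fun k (h : k \in fv f) => h) hs; first exact/decideP.
by case: (Th_transfer hM H v hb hf).
Qed.

Definition equiv_upto G (M N : Lstr G) (vm : nat -> M) (vn : nat -> N) (n : nat) : Prop :=
  forall f : formula G, {subset fv f <= iota 0 n} -> (sat vm f <-> sat vn f).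

Lemma equiv_upto_sym G (M N : Lstr G) (vm : nat -> M) (vn : nat -> N) n :
  equiv_upto vm vn n -> equiv_upto vn vm n.
Proof. by move=> H f hf; split=> /(H f hf). Qed.

(* Any two models of Th(Gamma(omega)) admit the forth step; the empty tuples
   are equivalent by completeness of Th. *)
Section ModelsOfTh.
Variables (G : seq (seq nat)) (lam : seq nat -> lab) (HG : tree_plan G lam).
Variables (M N : Lstr G).
Hypotheses (hM : models M (Th (Gomega HG))) (hN : models N (Th (Gomega HG))).

Lemma equiv_upto0 (vm : nat -> M) (vn : nat -> N) : equiv_upto vm vn 0.
Proof.
move=> f hf; have [H|H] := diagram_decides HG (X := [::]) (bs := [::]) hf erefl.
  by split=> _; [apply: (Th_transfer hN H) | apply: (Th_transfer hM H)].
by split=> h; [case: (Th_transfer hM H vm) | case: (Th_transfer hN H vn)].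
Qed.

Lemma forth (vm : nat -> M) (vn : nat -> N) n :
  equiv_upto vm vn n -> forall a : M, exists b : N, equiv_upto (upd vm n a) (upd vn n b) n.+1.
Proof.
move=> E a; pose X := iota 0 n.+1.
have [bs hs hb] := diagram_exists (upd vm n a) (atoms G X).
have /andP[_ /allP fvD] := diagram_qf bs (atoms_qf G X).
have fv_ex : {subset fv (FEx n (diagram (atoms G X) bs)) <= iota 0 n}.
  move=> k /=; rewrite mem_filter => /andP[kn /fvD].
  by rewrite /X !mem_iota; lia.
have [b hb'] : sat vn (FEx n (diagram (atoms G X) bs)) by apply/(E _ fv_ex); exists a.
exists b => f hf; have [H|H] := diagram_decides HG hf hs.
  by split=> _; [apply: (Th_transfer hN H) hb' | apply: (Th_transfer hM H) hb].
by split=> h; [case: (Th_transfer hM H _ hb) | case: (Th_transfer hN H _ hb')].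
Qed.

End ModelsOfTh.

Definition choose_match G (M N : Lstr G) (d : N) (vm : nat -> M) (vn : nat -> N) n (a : M)
  : N := epsilon (inhabits d) (fun b => equiv_upto (upd vm n a) (upd vn n b) n.+1).

Lemma choose_match_spec G (M N : Lstr G) (d : N) (vm : nat -> M) (vn : nat -> N) n a :
  (exists b, equiv_upto (upd vm n a) (upd vn n b) n.+1) ->
  equiv_upto (upd vm n a) (upd vn n (choose_match d vm vn n a)) n.+1.
Proof. exact: epsilon_spec. Qed.

(* Back-and-forth: from the forth step in both directions, interleave the
   enumerations eM (even stages) and eN (odd stages). *)
Section BackAndForth.
Variables (G : seq (seq nat)) (M N : Lstr G) (eM : nat -> M) (eN : nat -> N).
Hypothesis equiv0 : forall (vm : nat -> M) (vn : nat -> N), equiv_upto vm vn 0.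
Hypothesis forthMN : forall (vm : nat -> M) (vn : nat -> N) n, equiv_upto vm vn n ->
  forall a, exists b, equiv_upto (upd vm n a) (upd vn n b) n.+1.
Hypothesis forthNM : forall (vn : nat -> N) (vm : nat -> M) n, equiv_upto vn vm n ->
  forall b, exists a, equiv_upto (upd vn n b) (upd vm n a) n.+1.

Fixpoint stage (k : nat) : (nat -> M) * (nat -> N) :=
  if k is k'.+1 then
    let (vm, vn) := stage k' in
    if odd k' then
      let b := eN k'./2 in (upd vm k' (choose_match (eM 0) vn vm k' b), upd vn k' b)
    else
      let a := eM k'./2 in (upd vm k' a, upd vn k' (choose_match (eN 0) vm vn k' a))
  else (fun _ => eM 0, fun _ => eN 0).

Lemma stage_equiv k : equiv_upto (stage k).1 (stage k).2 k.
Proof.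
elim: k => [|k IH] /=; first exact: equiv0.
case: (stage k) IH => vm vn /= IH; case: (odd k) => /=.
  by apply/equiv_upto_sym/choose_match_spec/forthNM/equiv_upto_sym.
exact/choose_match_spec/forthMN.
Qed.

Definition bf_left (i : nat) : M := (stage i.+1).1 i.
Definition bf_right (i : nat) : N := (stage i.+1).2 i.

Lemma stage_stable k i : i < k -> (stage k).1 i = bf_left i /\ (stage k).2 i = bf_right i.
Proof.
elim: k => [|k IH] // hi; case: (eqVneq i k) => [->|ne]; first by [].
have [<- <-] : (stage k).1 i = bf_left i /\ (stage k).2 i = bf_right i.
  by apply: IH; rewrite ltn_neqAle ne -ltnS.
by rewrite /=; case: (stage k) => vm vn; case: (odd k); rewrite /= /upd (negPf ne).
Qed.

Lemma bf_elementary (f : formula G) : sat bf_left f <-> sat bf_right f.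
Proof.
pose k := (\max_(x <- fv f) x).+1.
have fvk : {subset fv f <= iota 0 k}.
  by move=> x hx; rewrite mem_iota add0n ltnS; apply: leq_bigmax_seq.
have hl : {in fv f, bf_left =1 (stage k).1}.
  by move=> x /fvk; rewrite mem_iota add0n => /stage_stable [-> _].
have hr : {in fv f, bf_right =1 (stage k).2}.
  by move=> x /fvk; rewrite mem_iota add0n => /stage_stable [_ ->].
by rewrite (sat_coinc hl) (sat_coinc hr); exact: stage_equiv.
Qed.

Lemma bf_left_even i : bf_left i.*2 = eM i.
Proof.
have : ~~ odd i.*2 /\ i.*2./2 = i by rewrite odd_double doubleK.
rewrite /bf_left; move: i.*2 => k [/negPf keven <-] /=.
by case: (stage k) => vm vn; rewrite keven /= /upd eqxx.
Qed.

Lemma bf_right_odd i : bf_right i.*2.+1 = eN i.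
Proof.
have : odd i.*2.+1 /\ (i.*2.+1)./2 = i.
  by split; [rewrite /= odd_double | exact: uphalf_double].
rewrite /bf_right; move: i.*2.+1 => k [kodd <-] /=.
by case: (stage k) => vm vn; rewrite kodd /= /upd eqxx.
Qed.

End BackAndForth.

Lemma iso_of_enumerations G (M N : Lstr G) (a : nat -> M) (b : nat -> N)
    (ia : M -> nat) (ib : N -> nat) :
  cancel ia a -> cancel ib b -> (forall f : formula G, sat a f <-> sat b f) ->
  Liso M N.
Proof.
move=> iaK ibK ab.
pose h x := b (ia x); pose g y := a (ib y).
have hE i : h (a i) = b i.
  by have /= := proj1 (ab (FEq G (TVar (ia (a i))) (TVar i))); rewrite iaK; apply.
have gE i : g (b i) = a i.
  by have /= := proj2 (ab (FEq G (TVar (ib (b i))) (TVar i))); rewrite ibK; apply.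
exists h; split; [|split; [|split; [|split; [|split]]]].
- by exists g => [x | y]; [rewrite /h gE iaK | rewrite /g hE ibK].
- by have /= := proj1 (ab (FEq G (TVar (ia (s_eps M))) TEps)); rewrite iaK; apply.
- move=> x y; have /= := proj1 (ab (FEq G (TVar (ia (s_meet x y)))
                                    (TMeet (TVar (ia x)) (TVar (ia y))))).
  by rewrite !iaK; apply.
- move=> x; have /= := proj1 (ab (FEq G (TVar (ia (s_pred x))) (TPred (TVar (ia x))))).
  by rewrite !iaK; apply.
- by move=> x y; have /= := ab (FLe G (TVar (ia x)) (TVar (ia y))); rewrite !iaK.
- by move=> s x; have /= := ab (FP s (TVar (ia x))); rewrite iaK.
Qed.

Lemma categoricity G lam (HG : tree_plan G lam) : aleph0_categorical (Th (Gomega HG)).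
Proof.
move=> M N hM hN [eM [gM _ gMK]] [eN [gN _ gNK]].
apply: (@iso_of_enumerations G M N (bf_left eM eN) (bf_right eM eN)
          (fun x => (gM x).*2) (fun y => (gN y).*2.+1)).
- by move=> x; rewrite bf_left_even gMK.
- by move=> y; rewrite bf_right_odd gNK.
- exact: (bf_elementary _ _ (equiv_upto0 hM hN) (forth hM hN) (forth hN hM)).
Qed.

Unset Implicit Arguments.

Theorem mainTheorem4 (G : seq (seq nat)) (lam : seq nat -> lab)
  (HG : tree_plan G lam) :
  aleph0_categorical (Th (Gomega HG)) /\ has_QE (Th (Gomega HG)).
Proof. by split; [exact: categoricity | exact: QE]. Qed.
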